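(* Let $p$ be a prime and $n\ge1$, and let $A,B,Q\in\mathbb{L}_p^{n\times n}$ with $\det(Q)\neq0$ and $AQ=QB$. Then the linear cellular automaton over $(\mathbb{Z}/p\mathbb{Z})^n$ with associated matrix $A$ is positively expansive if and only if the linear cellular automaton over $(\mathbb{Z}/p\mathbb{Z})^n$ with associated matrix $B$ is positively expansive.
   Context: $\mathbb{L}_p=\mathbb{Z}/p\mathbb{Z}[X,X^{-1}]$. The linear cellular automaton over $(\mathbb{Z}/p\mathbb{Z})^n$ with associated matrix $\sum_{j=-r}^rA_jX^{-j}$ ($A_j\in(\mathbb{Z}/p\mathbb{Z})^{n\times n}$) is the map $\mathcal{F}$ on $((\mathbb{Z}/p\mathbb{Z})^n)^{\mathbb{Z}}$ with $\mathcal{F}(c)_i=\sum_{j=-r}^rA_jc_{i+j}$. The configuration space carries the metric $d(c,c')=2^{-\min\{|j|:c_j\neq c'_j\}}$ ($d(c,c)=0$). $\mathcal{F}$ is positively expansive if there is $\varepsilon>0$ such that for all configurations $c\neq c'$ there is $\ell\in\mathbb{N}$ with $d(\mathcal{F}^\ell(c),\mathcal{F}^\ell(c'))\geq\varepsilon$. *)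

From Stdlib Require Import Reals ClassicalEpsilon.
From mathcomp Require Import all_boot all_order all_algebra fraction.
Set Implicit Arguments. Unset Strict Implicit. Unset Printing Implicit Defensive.
Import Order.TTheory GRing.Theory Num.Theory.
Local Open Scope ring_scope.

Definition zrange (r : nat) : seq int :=
  [seq ((k%:Z) - (r%:Z))%R | k <- iota 0 (r + r).+1].

(* A matrix over L_p = (Z/pZ)[X,X^-1] is represented by its family of
   coefficient matrices j |-> A_j (the matrix is sum_j A_j X^{-j}),
   supported in [-r, r]. *)
Definition supported (p n r : nat) (A : int -> 'M['F_p]_n) : Prop :=
  forall j : int, (r < `|j|)%N -> A j = 0.

(* Embedding L_p^{n x n} -> Frac(F_p[X])^{n x n} (an injective ring morphism,
   so products and determinants are those of L_p^{n x n}). *)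
Definition lmx (p n r : nat) (A : int -> 'M['F_p]_n)
  : 'M[{fraction {poly 'F_p}}]_n :=
  \matrix_(i, k) \sum_(j <- zrange r)
      FracField.tofrac (A j i k)%:P * (FracField.tofrac ('X : {poly 'F_p})) ^ (- j).

Definition config (p n : nat) := int -> 'cV['F_p]_n.

Definition lca (p n r : nat) (A : int -> 'M['F_p]_n) (c : config p n)
  : config p n :=
  fun i => \sum_(j <- zrange r) (A j *m c (i + j)).

Definition decb (P : Prop) : bool :=
  if excluded_middle_informative P then true else false.

(* d(c,c') = 2^{-min{|j| : c_j <> c'_j}}, d(c,c) = 0 *)
Definition cdist (p n : nat) (c c' : config p n) : R :=
  match excluded_middle_informative
          (exists m : nat, decb (exists j : int, `|j|%N = m /\ c j <> c' j)) with
  | left H => Rinv (pow 2 (ex_minn H))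
  | right _ => R0
  end.

Definition pos_expansive (p n : nat) (F : config p n -> config p n) : Prop :=
  exists eps : R, Rlt R0 eps /\
    forall c c' : config p n, c <> c' ->
      exists l : nat, Rle eps (cdist (iter l F c) (iter l F c')).

From Stdlib Require Import Reals ClassicalEpsilon FunctionalExtensionality Classical Lra.
From mathcomp Require Import all_boot all_order all_algebra fraction zify.
Import Order.TTheory GRing.Theory Num.Theory.
Set Implicit Arguments. Unset Strict Implicit. Unset Printing Implicit Defensive.

(* Multiplying by a power of X turns the associated matrices of A, B, Q into
   polynomial matrices A', B', Q', and a polynomial matrix acts on
   configurations as a sliding-block map (X being the shift).  After clearing
   denominators, AQ = QB says that the map of Q' intertwines F_A and F_B.
   This map is continuous, and it is injective once a window of width
   deg det Q' is fixed, because adj(Q') Q' = det Q' and a scalar linear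
   recurrence is determined by that many consecutive values.  Such a map
   transports expansivity from F_A to F_B; adj(Q'), which intertwines F_B
   and F_A in the same way, gives the converse. *)

Local Open Scope ring_scope.

Definition agree (T : Type) (N : nat) (c c' : int -> T) : Prop :=
  forall j : int, (`|j| <= N)%N -> c j = c' j.

Lemma agree_le (T : Type) (M N : nat) (c c' : int -> T) :
  (M <= N)%N -> agree N c c' -> agree M c c'.
Proof. by move=> hMN h j hj; apply: h; apply: leq_trans hMN. Qed.

Lemma sum_antidiagonal (V : zmodType) (g : nat -> nat -> V) N :
  \sum_(0 <= m < N) \sum_(0 <= l < m.+1) g l (m - l)%N =
  \sum_(0 <= k < N) \sum_(0 <= l < N - k) g k l.
Proof.
elim: N => [|N IH]; first by rewrite !big_geq.
rewrite big_nat_recr //= IH.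
rewrite [RHS](eq_big_nat _ _ (F2 := fun k => \sum_(0 <= l < N - k) g k l + g k (N - k)%N)); last first.
  by move=> k /andP [_ hk]; rewrite subSn // big_nat_recr.
by rewrite big_split /= [in RHS](big_nat_recr N) //= subnn [X in _ + X + _]big_geq // addr0.
Qed.

Lemma sum_antidiagonal_rect (V : zmodType) (g : nat -> nat -> V) S T :
  (forall k l, (S <= k)%N -> g k l = 0) -> (forall k l, (T <= l)%N -> g k l = 0) ->
  \sum_(0 <= m < S + T) \sum_(0 <= l < m.+1) g l (m - l)%N =
  \sum_(0 <= k < S) \sum_(0 <= l < T) g k l.
Proof.
move=> hS hT; rewrite sum_antidiagonal (big_cat_nat (leq0n S) (leq_addr T S)) /=.
rewrite [X in _ + X]big_nat_cond [X in _ + X]big1 ?addr0; last first.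
  by move=> k /andP [/andP [hk _] _]; rewrite big1 // => l _; rewrite hS.
apply: eq_big_nat => k /andP [_ hk].
rewrite (@big_cat_nat _ _ _ T) /= ?leq0n //; last by lia.
rewrite [X in _ + X]big_nat_cond [X in _ + X]big1 ?addr0 //.
by move=> l /andP [/andP [hl _] _]; rewrite hT.
Qed.

Section PolyMatrixAction.

Variables (K : comNzRingType) (n : nat).
Implicit Types (M N : 'M[{poly K}]_n) (c : int -> 'cV[K]_n).

Definition coefmx M k : 'M[K]_n := \matrix_(a, b) (M a b)`_k.

Definition mxdeg_lt M T := forall k, (T <= k)%N -> coefmx M k = 0.

Definition polymx_size M : nat := \max_(ab : 'I_n * 'I_n) size (M ab.1 ab.2).

(* ['X^k] acts as the shift [c |-> c (. - k)]. *)
Definition polymx_act M c : int -> 'cV[K]_n :=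
  fun i => \sum_(0 <= k < polymx_size M) coefmx M k *m c (i - k%:Z).

Lemma mxdeg_lt_size M : mxdeg_lt M (polymx_size M).
Proof.
move=> k hk; apply/matrixP=> a b; rewrite !mxE nth_default //.
exact: leq_trans (leq_bigmax_cond (a, b) _) hk.
Qed.

Lemma sum_coefmx_widen M T T' c i : mxdeg_lt M T -> (T <= T')%N ->
  \sum_(0 <= k < T') coefmx M k *m c (i - k%:Z) =
  \sum_(0 <= k < T) coefmx M k *m c (i - k%:Z).
Proof.
move=> hM hT; rewrite (big_cat_nat (leq0n T) hT) /=.
rewrite [X in _ + X]big_nat_cond [X in _ + X]big1 ?addr0 //.
by move=> k /andP [/andP [hk _] _]; rewrite hM // mul0mx.
Qed.

Lemma polymx_actE M T c i : mxdeg_lt M T ->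
  polymx_act M c i = \sum_(0 <= k < T) coefmx M k *m c (i - k%:Z).
Proof.
move=> hM; pose T' := maxn (polymx_size M) T.
rewrite /polymx_act -(@sum_coefmx_widen M _ T' c i (@mxdeg_lt_size M) (leq_maxl _ _)).
exact: (@sum_coefmx_widen M T T' c i hM (leq_maxr _ _)).
Qed.

Lemma coefmxM M N k :
  coefmx (M *m N) k = \sum_(0 <= l < k.+1) coefmx M l *m coefmx N (k - l)%N.
Proof.
apply/matrixP=> a b; rewrite !mxE coef_sum summxE big_mkord.
under eq_bigr do rewrite coefM.
rewrite exchange_big /=; apply: eq_bigr => l _.
by rewrite !mxE; apply: eq_bigr => j _; rewrite !mxE.
Qed.

Lemma mxdeg_ltM M N S T : mxdeg_lt M S -> mxdeg_lt N T -> mxdeg_lt (M *m N) (S + T).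
Proof.
move=> hM hN k hk; rewrite coefmxM big_nat_cond big1 // => l /andP [/andP [_ hl] _].
have [hSl|hlS] := leqP S l; first by rewrite hM // mul0mx.
by rewrite hN ?mulmx0 //; lia.
Qed.

Lemma polymx_actM M N c i : polymx_act (M *m N) c i = polymx_act M (polymx_act N c) i.
Proof.
have hM := @mxdeg_lt_size M; have hN := @mxdeg_lt_size N.
rewrite (polymx_actE _ _ (mxdeg_ltM hM hN)) /polymx_act.
pose g k l := coefmx M k *m coefmx N l *m c (i - (k + l)%N%:Z).
transitivity (\sum_(0 <= m < polymx_size M + polymx_size N)
                \sum_(0 <= l < m.+1) g l (m - l)%N).
  apply: eq_big_nat => m _; rewrite coefmxM mulmx_suml.
  by apply: eq_big_nat => l /andP [_ hl]; rewrite /g subnKC.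
rewrite sum_antidiagonal_rect; last first.
- by move=> k l hl; rewrite /g hN // mulmx0 mul0mx.
- by move=> k l hk; rewrite /g hM // !mul0mx.
apply: eq_big_nat => k _; rewrite mulmx_sumr.
by apply: eq_big_nat => l _; rewrite /g -mulmxA; congr (_ *m (_ *m c _)); lia.
Qed.

Lemma coefmxXnZ M s k :
  coefmx ('X^s *: M) k = if (k < s)%N then 0 else coefmx M (k - s)%N.
Proof. by apply/matrixP=> a b; rewrite !mxE coefXnM; case: ifP; rewrite ?mxE. Qed.

Lemma polymx_actXnZ M s c i : polymx_act ('X^s *: M) c i = polymx_act M c (i - s%:Z).
Proof.
have hM := @mxdeg_lt_size M.
have hXM : mxdeg_lt ('X^s *: M) (s + polymx_size M).
  by move=> k hk; rewrite coefmxXnZ; case: ifP => // _; rewrite hM //; lia.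
rewrite (polymx_actE _ _ hXM) (big_cat_nat (leq0n s) (leq_addr _ s)) /=.
rewrite [X in X + _]big_nat_cond [X in X + _]big1 ?add0r; last first.
  by move=> k /andP [/andP [_ hk] _]; rewrite coefmxXnZ hk mul0mx.
rewrite -{1}(add0n s) big_addn addnC addnK.
apply: eq_big_nat => k _; rewrite coefmxXnZ ltnNge leq_addl /= addnK.
by congr (_ *m c _); lia.
Qed.

Lemma polymx_act_shift M s c i :
  polymx_act M (fun j => c (j + s)) i = polymx_act M c (i + s).
Proof. by apply: eq_big_nat => k _; congr (_ *m c _); lia. Qed.

Lemma polymx_actB M c c' i :
  polymx_act M (fun j => c j - c' j) i = polymx_act M c i - polymx_act M c' i.
Proof. by rewrite -sumrB; apply: eq_big_nat => k _; rewrite mulmxBr. Qed.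

Lemma polymx_act_scalar (d : {poly K}) c i :
  polymx_act d%:M c i = \sum_(0 <= k < size d) d`_k *: c (i - k%:Z).
Proof.
have coef_d k : coefmx (d%:M : 'M_n) k = (d`_k)%:M.
  by apply/matrixP=> a b; rewrite !mxE coefMn.
have hd : mxdeg_lt (d%:M : 'M_n) (size d).
  by move=> k hk; rewrite coef_d nth_default //; apply/matrixP=> a b; rewrite !mxE mul0rn.
by rewrite (polymx_actE _ _ hd); apply: eq_big_nat => k _; rewrite coef_d mul_scalar_mx.
Qed.

Lemma polymx_act_agree M (r : nat) c c' :
  agree (r + polymx_size M) c c' -> agree r (polymx_act M c) (polymx_act M c').
Proof. by move=> h i hi; apply: eq_big_nat => k /andP [_ hk]; rewrite h //; lia. Qed.

End PolyMatrixAction.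

Lemma sum_nat_single (V : zmodType) N a (f : nat -> V) :
  (a < N)%N -> (forall k, (k < N)%N -> k != a -> f k = 0) ->
  \sum_(0 <= k < N) f k = f a.
Proof.
move=> ha hf; rewrite (bigD1_seq a) ?mem_index_iota ?iota_uniq //= big1_seq ?addr0 //.
by move=> k /andP [hka]; rewrite mem_index_iota => /andP [_ hk]; apply: hf.
Qed.

Section LinearRecurrence.

Variables (K : fieldType) (V : lmodType K) (d : {poly K}) (w : int -> V).
Hypothesis d_neq0 : d != 0.
Hypothesis w_rec : forall i, \sum_(0 <= k < size d) d`_k *: w (i - k%:Z) = 0.

(* Solve the recurrence at [i = j + a] for its lowest nonzero coefficient [d`_a]. *)
Lemma recurrence_forward j :
  (forall k, (0 < k < size d)%N -> w (j - k%:Z) = 0) -> w j = 0.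
Proof.
move=> hw; have hex : exists k, d`_k != 0.
  by exists (size d).-1; rewrite -lead_coefE lead_coef_eq0.
case: (ex_minnP hex) => a ha hmin.
have had : (a < size d)%N by rewrite ltnNge; apply: contra ha => /(nth_default 0) ->.
have := w_rec (j + a%:Z); rewrite (@sum_nat_single _ _ a) //; last first.
  move=> k hk hka; have [hak|hka'] := ltnP a k.
    by rewrite (_ : _ - _ = j - (k - a)%N%:Z) ?hw ?scaler0 //; lia.
  have [->|hdk] := eqVneq d`_k 0; first by rewrite scale0r.
  by have := hmin _ hdk; lia.
by rewrite addrK => /eqP; rewrite scaler_eq0 (negbTE ha) => /eqP.
Qed.

(* Solve the recurrence at [i = j + t] for its leading coefficient [d`_t]. *)
Lemma recurrence_backward j :
  (forall k, (0 < k < size d)%N -> w (j + k%:Z) = 0) -> w j = 0.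
Proof.
move=> hw; set t := (size d).-1.
have ht : (t < size d)%N by rewrite prednK // size_poly_gt0.
have := w_rec (j + t%:Z); rewrite (@sum_nat_single _ _ t) //; last first.
  by move=> k hk hkt; rewrite (_ : _ - _ = j + (t - k)%N%:Z) ?hw ?scaler0 //; lia.
rewrite addrK => /eqP; rewrite scaler_eq0 -lead_coefE lead_coef_eq0.
by rewrite (negbTE d_neq0) => /eqP.
Qed.

Lemma recurrence_eq0 (L : nat) : (size d <= L)%N -> agree L w (fun=> 0) -> w =1 fun=> 0.
Proof.
move=> hL hw j; have : agree (L + `|j|) w (fun=> 0); last by apply; lia.
elim: `|j|%N => [|m IH]; first by rewrite addn0.
move=> i hi; have [him|him] := leqP `|i| (L + m); first exact: IH.
have [hi0|hi0] := lerP 0 i.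
- by apply: recurrence_forward => k hk; apply: IH; lia.
- by apply: recurrence_backward => k hk; apply: IH; lia.
Qed.

End LinearRecurrence.

(* [P' *m P = d%:M] makes [P] injective up to the [d]-recurrence, whose
   solutions are fixed by a window of width [size d]. *)
Lemma polymx_act_inj (K : fieldType) n (P P' : 'M[{poly K}]_n) (d : {poly K}) :
  d != 0 -> P' *m P = d%:M ->
  forall c c', polymx_act P c = polymx_act P c' -> agree (size d) c c' -> c = c'.
Proof.
move=> hd hPP c c' hPc hcc'; pose w j := c j - c' j.
have hw : forall i, \sum_(0 <= k < size d) d`_k *: w (i - k%:Z) = 0.
  move=> i; rewrite -polymx_act_scalar -hPP polymx_actM.
  rewrite (_ : polymx_act P w = fun=> 0).
    by rewrite /polymx_act big1 // => k _; rewrite mulmx0.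
  by apply: functional_extensionality => j; rewrite polymx_actB hPc subrr.
apply: functional_extensionality => j; apply/eqP; rewrite -subr_eq0; apply/eqP.
apply: (recurrence_eq0 hd hw (leqnn _)) => k hk.
by rewrite /w hcc' ?subrr.
Qed.

Section LinearCA.

Variables (p n : nat).
Implicit Types (r : nat) (A : int -> 'M['F_p]_n).

(* [X^r * sum_j A_j X^-j], a polynomial matrix. *)
Definition lca_polymx r A : 'M[{poly 'F_p}]_n :=
  \matrix_(a, b) \poly_(m < (r + r).+1) A (r%:Z - m%:Z) a b.

Lemma coefmx_lca_polymx r A k :
  coefmx (lca_polymx r A) k = if (k < (r + r).+1)%N then A (r%:Z - k%:Z) else 0.
Proof. by apply/matrixP=> a b; rewrite !mxE coef_poly; case: ifP; rewrite ?mxE. Qed.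

Lemma lca_polymx_act r A c i : lca r A c i = polymx_act (lca_polymx r A) c (i + r%:Z).
Proof.
have hdeg : mxdeg_lt (lca_polymx r A) (r + r).+1.
  by move=> k hk; rewrite coefmx_lca_polymx ltnNge hk.
rewrite (polymx_actE _ _ hdeg) /lca /zrange big_map.
rewrite (_ : iota 0 _ = index_iota 0 (r + r).+1); last by rewrite /index_iota subn0.
rewrite [RHS]big_nat_rev /=; apply: eq_big_nat => k /andP [_ hk].
by rewrite coefmx_lca_polymx add0n ifT; [congr (A _ *m c _) | ]; lia.
Qed.

Let x := FracField.tofrac ('X : {poly 'F_p}).

Lemma tofracX_neq0 : x != 0.
Proof. by rewrite tofrac_eq0 polyX_eq0. Qed.

Lemma lmx_lca_polymx r A :
  lmx r A = x ^ (- (r%:Z)) *: map_mx (@FracField.tofrac _) (lca_polymx r A).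
Proof.
apply/matrixP=> a b; rewrite !mxE /zrange big_map.
rewrite (_ : iota 0 _ = index_iota 0 (r + r).+1); last by rewrite /index_iota subn0.
rewrite poly_def rmorph_sum mulr_sumr.
rewrite -(big_mkord xpredT
  (fun m => x ^ (- r%:Z) * FracField.tofrac (A (r%:Z - m%:Z) a b *: 'X ^+ m))).
rewrite [RHS]big_nat_rev /=; apply: eq_big_nat => k /andP [_ hk].
rewrite add0n -mul_polyC rmorphM rmorphXn mulrCA.
have -> : r%:Z - ((r + r).+1 - k.+1)%N%:Z = k%:Z - r%:Z by lia.
congr (_ * _); rewrite exprnP -expfzDr ?tofracX_neq0 //; congr (x ^ _); lia.
Qed.

Lemma det_lca_polymx_neq0 r A : \det (lmx r A) != 0 -> \det (lca_polymx r A) != 0.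
Proof. by apply: contraNneq => h; rewrite lmx_lca_polymx detZ det_map_mx h rmorph0 mulr0. Qed.

(* Clearing the denominators [X^rA X^rQ] and [X^rQ X^rB] of [A Q = Q B]. *)
Lemma lca_polymx_intertwine rA rB rQ (A B Q : int -> 'M['F_p]_n) :
  lmx rA A *m lmx rQ Q = lmx rQ Q *m lmx rB B ->
  'X^rB *: (lca_polymx rA A *m lca_polymx rQ Q) =
  'X^rA *: (lca_polymx rQ Q *m lca_polymx rB B).
Proof.
have hx := tofracX_neq0.
rewrite !lmx_lca_polymx -!scalemxAl -!scalemxAr !scalerA.
move=> /(congr1 (fun M => x ^ (rA + rQ + rB)%N *: M)) /=; rewrite !scalerA.
have -> : x ^ (rA + rQ + rB)%N * (x ^ (- rA%:Z) * x ^ (- rQ%:Z)) = x ^+ rB.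
  by rewrite exprnP -!expfzDr //; congr (x ^ _); lia.
have -> : x ^ (rA + rQ + rB)%N * (x ^ (- rQ%:Z) * x ^ (- rB%:Z)) = x ^+ rA.
  by rewrite exprnP -!expfzDr //; congr (x ^ _); lia.
rewrite -!map_mxM /x -!rmorphXn -!map_mxZ => /matrixP h.
by apply/matrixP=> a b; move/(_ a b)/eqP: h; rewrite !mxE tofrac_eq => /eqP.
Qed.

Lemma lca_polymx_act_comm rA rB (A B : int -> 'M['F_p]_n) (P : 'M[{poly 'F_p}]_n) :
  'X^rB *: (lca_polymx rA A *m P) = 'X^rA *: (P *m lca_polymx rB B) ->
  forall c, lca rA A (polymx_act P c) = polymx_act P (lca rB B c).
Proof.
move=> h c; apply: functional_extensionality => i.
move/(congr1 (fun M => polymx_act M c (i + rA%:Z + rB%:Z))): h.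
rewrite /= !polymx_actXnZ !polymx_actM.
rewrite (_ : i + rA%:Z + rB%:Z - rB%:Z = i + rA%:Z); last by lia.
rewrite (_ : i + rA%:Z + rB%:Z - rA%:Z = i + rB%:Z); last by lia.
rewrite lca_polymx_act => ->; rewrite -polymx_act_shift.
by congr (polymx_act _ _ _); apply: functional_extensionality => j; rewrite lca_polymx_act.
Qed.

End LinearCA.

Lemma intertwine_adj (K : idomainType) n (M1 M2 P : 'M[{poly K}]_n) s1 s2 :
  \det P != 0 ->
  'X^s2 *: (M1 *m P) = 'X^s1 *: (P *m M2) ->
  'X^s1 *: (M2 *m \adj P) = 'X^s2 *: (\adj P *m M1).
Proof.
move=> hd /(congr1 (fun M => \adj P *m M *m \adj P)) /=.
rewrite -!scalemxAr -!scalemxAl.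
rewrite -!mulmxA mul_mx_adj !mulmxA mul_adj_mx mul_mx_scalar mul_scalar_mx.
rewrite -!scalemxAl => /matrixP h.
apply/matrixP=> a b; move: (h a b); rewrite !mxE => hab.
by apply: (mulfI hd); rewrite mulrCA -hab mulrCA.
Qed.

Section Expansivity.

Variables p n : nat.
Implicit Types (c : config p n) (F : config p n -> config p n).

Local Open Scope R_scope.

Lemma decbP (P : Prop) : decb P = true <-> P.
Proof. by rewrite /decb; case: excluded_middle_informative. Qed.

Lemma Rinv_pow2_le (a b : nat) : (a <= b)%N -> / 2 ^ b <= / 2 ^ a.
Proof.
move=> hab; apply: Rinv_le_contravar; first by apply: pow_lt; lra.
by apply: Rle_pow; [lra | apply/ssrnat.leP].
Qed.

Lemma cdist_le_agree c c' (N : nat) : agree N c c' -> cdist c c' <= / 2 ^ N.+1.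
Proof.
move=> h; rewrite /cdist; case: excluded_middle_informative => [H|_].
  case: ex_minnP => m /decbP [j [hj hne]] _; apply: Rinv_pow2_le.
  by rewrite ltnNge; apply: contra_notN hne => hm; apply: h; rewrite hj.
by apply/Rlt_le/Rinv_0_lt_compat/pow_lt; lra.
Qed.

Lemma agree_cdist_lt c c' (N : nat) : cdist c c' < / 2 ^ N -> agree N c c'.
Proof.
move=> hd j hj; apply: NNPP => hne.
have hex : exists m : nat, decb (exists j : int, `|j|%N = m /\ c j <> c' j).
  by exists `|j|%N; apply/decbP; exists j.
move: hd; rewrite /cdist; case: excluded_middle_informative => [H|//].
case: ex_minnP => m hm hmin.
have /Rinv_pow2_le : (m <= N)%N.
  by apply: leq_trans hj; apply: hmin; apply/decbP; exists j.
lra.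
Qed.

Lemma pos_expansiveP F : pos_expansive F <->
  exists N : nat, forall c c', c <> c' -> exists l, ~ agree N (iter l F c) (iter l F c').
Proof.
split=> [[eps [heps hexp]] | [N hN]].
- have [N hN] := pow_lt_1_zero (/ 2) ltac:(rewrite Rabs_pos_eq; lra) eps heps.
  have hNeps : / 2 ^ N.+1 < eps.
    move: (hN N.+1 (le_S _ _ (le_n N))); rewrite pow_inv Rabs_pos_eq //.
    by apply/Rlt_le/Rinv_0_lt_compat/pow_lt; lra.
  exists N => c c' /hexp [l hl]; exists l => /cdist_le_agree; lra.
- exists (/ 2 ^ N); split; first by apply/Rinv_0_lt_compat/pow_lt; lra.
  move=> c c' /hN [l hl]; exists l; apply: Rnot_lt_le => /agree_cdist_lt; exact: hl.
Qed.

End Expansivity.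

Lemma pos_expansive_transfer p n (FA FB H : config p n -> config p n) (s L : nat) :
  (forall c, FA (H c) = H (FB c)) ->
  (forall (N : nat) c c', agree (N + s) c c' -> agree N (H c) (H c')) ->
  (forall c c', H c = H c' -> agree L c c' -> c = c') ->
  pos_expansive FA -> pos_expansive FB.
Proof.
move=> hcomm hloc hinj /pos_expansiveP [N hN]; apply/pos_expansiveP.
exists (N + s + L)%N => c c' hne; apply: NNPP => hno.
have hall l : agree (N + s + L) (iter l FB c) (iter l FB c').
  by apply: NNPP => hl; apply: hno; exists l.
have hiter l c0 : iter l FA (H c0) = H (iter l FB c0).
  by elim: l => [|l IH] //=; rewrite IH hcomm.
have hH : H c <> H c'.
  by move=> hH; apply/hne/hinj => //; apply: agree_le (hall 0%N); lia.
have [l hl] := hN _ _ hH; apply: hl; rewrite !hiter.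
by apply: hloc; apply: agree_le (hall l); lia.
Qed.

Theorem lemma8 (p n : nat) (hp : prime p) (hn : (0 < n)%N)
  (rA rB rQ : nat) (A B Q : int -> 'M['F_p]_n)
  (hA : supported rA A) (hB : supported rB B) (hQ : supported rQ Q) :
  \det (lmx rQ Q) != 0 ->
  lmx rA A *m lmx rQ Q = lmx rQ Q *m lmx rB B ->
  (pos_expansive (lca rA A) <-> pos_expansive (lca rB B)).
Proof.
move=> /det_lca_polymx_neq0 hdet /lca_polymx_intertwine hAQB.
set P := lca_polymx rQ Q in hdet hAQB.
have hBPA := intertwine_adj hdet hAQB.
split; apply: pos_expansive_transfer.
- exact: lca_polymx_act_comm hAQB.
- exact: polymx_act_agree.
- exact: polymx_act_inj hdet (mul_adj_mx P).
- exact: lca_polymx_act_comm hBPA.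
- exact: polymx_act_agree.
- exact: polymx_act_inj hdet (mul_mx_adj P).
Qed.
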